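(* Let $I_1\subset\mathbb{R}$ be an open interval and $I_2$ an open, relatively compact subinterval of $I_1$. For every integer $n\ge1$ and all $C_1,C_2>0$ there exists $\delta>0$ such that for every $C^1$ map $h:I_1\to\mathbb{R}$ with $\|h-\mathrm{id}\|_{1,I_1}<\delta$ and all $x,y\in I_2$ with $|y-x|<C_2|h^n(x)-x|$, we have $$|(h(y)-y)-(h(x)-x)|<C_1|h(x)-x|.$$
   Context: For an open set $J\subset\mathbb{R}$ and a $C^1$ map $u$ on $J$, $\|u\|_{1,J}=\sup_{x\in J}(|u(x)|+|u'(x)|)$. *)

From Stdlib Require Import Reals.
Open Scope R_scope.

Definition is_open_interval (I : R -> Prop) : Prop :=
  (exists x, I x) /\
  (forall x y z, I x -> I z -> x <= y <= z -> I y) /\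
  (forall x, I x -> exists e, 0 < e /\ forall y, Rabs (y - x) < e -> I y).

Definition C1_on (J : R -> Prop) (u u' : R -> R) : Prop :=
  (forall x, J x -> derivable_pt_lim u x (u' x)) /\
  (forall x, J x -> continuity_pt u' x).

(* ||u||_{1,J} < d, where ||u||_{1,J} = sup_{x in J} (|u x| + |u' x|). *)
Definition C1_norm_lt (J : R -> Prop) (u u' : R -> R) (d : R) : Prop :=
  exists M, M < d /\ forall x, J x -> Rabs (u x) + Rabs (u' x) <= M.

From Stdlib Require Import Reals Lra Lia.
Open Scope R_scope.

(* Write g := h - id; the hypothesis says |g| + |g'| <= M < delta
   on I1.  By the mean value theorem g is M-Lipschitz on I1 (lemma
   [deriv_bound_lipschitz]).  Once M <= 1, the displacement of the orbit of x
   grows at most geometrically: |h^k x - x| <= (2^k - 1) |g x|, as long as the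
   orbit stays in I1 (lemma [iterate_displacement]).  Since |g x| <= M < delta,
   choosing delta <= e / 2^n keeps the first n iterates inside an
   e-neighbourhood of [a, b] contained in I1 (lemma [interval_margin]).  Then
     |g y - g x| <= M |y - x| < delta * C2 * 2^n * |g x| <= C1 |g x|
   as soon as delta <= C1 / (C2 * 2^n); such a delta <= 1 exists by [small_step]. *)

Lemma interval_margin (I : R -> Prop) (a b : R) :
  is_open_interval I -> a <= b -> (forall z, a <= z <= b -> I z) ->
  exists e, 0 < e /\ forall z, a - e <= z <= b + e -> I z.
Proof.
  intros [_ [Hconv Hopen]] Hab Hsub.
  destruct (Hopen a (Hsub a ltac:(lra))) as [e1 [He1 Ha]].
  destruct (Hopen b (Hsub b ltac:(lra))) as [e2 [He2 Hb]].
  exists (Rmin e1 e2 / 2).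
  pose proof (Rmin_l e1 e2); pose proof (Rmin_r e1 e2).
  assert (Hmin : 0 < Rmin e1 e2) by (apply Rmin_glb_lt; lra).
  split; [lra|].
  intros z Hz. apply (Hconv (a - Rmin e1 e2 / 2) z (b + Rmin e1 e2 / 2)); auto.
  - apply Ha. rewrite Rabs_left1; lra.
  - apply Hb. rewrite Rabs_right; lra.
Qed.

Lemma deriv_bound_lipschitz (J : R -> Prop) (u u' : R -> R) (M : R) :
  (forall x y z, J x -> J z -> x <= y <= z -> J y) ->
  (forall x, J x -> derivable_pt_lim u x (u' x)) ->
  (forall x, J x -> Rabs (u' x) <= M) ->
  forall v w, J v -> J w -> Rabs (u v - u w) <= M * Rabs (v - w).
Proof.
  intros Hconv Hder Hbound.
  assert (ordered : forall v w, J v -> J w -> v < w ->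
            Rabs (u w - u v) <= M * Rabs (w - v)).
  { intros v w Hv Hw Hvw.
    destruct (MVT_cor2 u u' v w Hvw) as [c [Hmvt Hc]].
    { intros c Hc. apply Hder, (Hconv v c w); auto. }
    rewrite Hmvt, Rabs_mult.
    apply Rmult_le_compat_r; [apply Rabs_pos|].
    apply Hbound, (Hconv v c w); auto; lra. }
  intros v w Hv Hw.
  destruct (total_order_T v w) as [[Hlt|Heq]|Hgt].
  - rewrite Rabs_minus_sym, (Rabs_minus_sym v w); auto.
  - subst. unfold Rminus. rewrite !Rplus_opp_r, Rabs_R0. lra.
  - auto.
Qed.

Lemma iterate_displacement (J : R -> Prop) (h : R -> R) (x : R) :
  (forall u v, J u -> J v -> Rabs ((h u - u) - (h v - v)) <= Rabs (u - v)) ->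
  forall k : nat,
    (forall z, Rabs (z - x) <= (2 ^ k - 1) * Rabs (h x - x) -> J z) ->
    Rabs (Nat.iter k h x - x) <= (2 ^ k - 1) * Rabs (h x - x).
Proof.
  intros Hlip k. set (d := Rabs (h x - x)).
  assert (Hd : 0 <= d) by apply Rabs_pos.
  induction k as [|k IH]; intros Hball.
  - simpl. unfold Rminus. rewrite Rplus_opp_r, Rabs_R0. lra.
  - assert (Hpow : 1 <= 2 ^ k) by (apply pow_R1_Rle; lra).
    assert (Hsmaller : forall z, Rabs (z - x) <= (2 ^ k - 1) * d -> J z).
    { intros z Hz. apply Hball. simpl. nra. }
    set (z := Nat.iter k h x).
    assert (Hzx : Rabs (z - x) <= (2 ^ k - 1) * d) by exact (IH Hsmaller).
    assert (Hx : J x).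
    { apply Hsmaller. unfold Rminus. rewrite Rplus_opp_r, Rabs_R0. nra. }
    pose proof (Hlip z x (Hsmaller z Hzx) Hx) as Hstep.
    change (Rabs (h z - x) <= (2 ^ S k - 1) * d).
    replace (h z - x) with ((h z - z - (h x - x)) + (h x - x) + (z - x)) by ring.
    pose proof (Rabs_triang (h z - z - (h x - x) + (h x - x)) (z - x)).
    assert (Rabs (h z - z - (h x - x) + (h x - x)) <= Rabs (h z - z - (h x - x)) + d)
      by apply Rabs_triang.
    simpl. lra.
Qed.

Lemma small_step (c1 c2 k1 k2 : R) :
  0 < c1 -> 0 < c2 -> 0 < k1 -> 0 < k2 ->
  exists delta, 0 < delta /\ delta <= 1 /\ delta * k1 <= c1 /\ delta * k2 <= c2.
Proof.
  intros Hc1 Hc2 Hk1 Hk2.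
  set (delta := Rmin 1 (Rmin (c1 / k1) (c2 / k2))).
  assert (H1 : delta <= c1 / k1) by (eapply Rle_trans; [apply Rmin_r | apply Rmin_l]).
  assert (H2 : delta <= c2 / k2) by (eapply Rle_trans; [apply Rmin_r | apply Rmin_r]).
  exists delta. repeat split.
  - repeat apply Rmin_glb_lt; try lra; apply Rdiv_lt_0_compat; lra.
  - apply Rmin_l.
  - apply (Rmult_le_compat_r k1) in H1; [|lra].
    unfold Rdiv in H1. rewrite Rmult_assoc, Rinv_l in H1 by lra. lra.
  - apply (Rmult_le_compat_r k2) in H2; [|lra].
    unfold Rdiv in H2. rewrite Rmult_assoc, Rinv_l in H2 by lra. lra.
Qed.

Theorem lemma3p11 (I1 : R -> Prop) (a b : R) :
  is_open_interval I1 ->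
  a < b -> (forall z, a <= z <= b -> I1 z) ->
  forall (n : nat) (C1 C2 : R), (1 <= n)%nat -> 0 < C1 -> 0 < C2 ->
  exists delta, 0 < delta /\
    forall h h' : R -> R,
      C1_on I1 h h' ->
      C1_norm_lt I1 (fun t => h t - t) (fun t => h' t - 1) delta ->
      forall x y, a < x < b -> a < y < b ->
        Rabs (y - x) < C2 * Rabs (Nat.iter n h x - x) ->
        Rabs ((h y - y) - (h x - x)) < C1 * Rabs (h x - x).
Proof.
  intros HI Hab Hsub n C1 C2 _ HC1 HC2.
  destruct (interval_margin I1 a b HI ltac:(lra) Hsub) as [e [He Hmargin]].
  set (P := 2 ^ n).
  assert (HP : 1 <= P) by (apply pow_R1_Rle; lra).
  destruct (small_step e C1 P (C2 * P)) as [delta [Hdpos [Hd1 [Hde HdC]]]]; try nra.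
  exists delta. split; [exact Hdpos|].
  intros h h' [Hder _] [M [HMd HM]] x y Hx Hy Hyx.
  set (d := Rabs (h x - x)).
  assert (HdM : d <= M).
  { pose proof (HM x (Hsub x ltac:(lra))). pose proof (Rabs_pos (h' x - 1)). unfold d. lra. }
  assert (Hlip : forall u v, I1 u -> I1 v -> Rabs ((h u - u) - (h v - v)) <= M * Rabs (u - v)).
  { apply (deriv_bound_lipschitz I1 (fun t => h t - t) (fun t => h' t - 1)); [apply HI| |].
    - intros t Ht. exact (derivable_pt_lim_minus h id t (h' t) 1 (Hder t Ht) (derivable_pt_lim_id t)).
    - intros t Ht. pose proof (HM t Ht). pose proof (Rabs_pos (h t - t)). lra. }
  assert (Horbit : Rabs (Nat.iter n h x - x) <= (P - 1) * d).
  { apply (iterate_displacement I1).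
    - intros u v Hu Hv. pose proof (Hlip u v Hu Hv). pose proof (Rabs_pos (u - v)). nra.
    - intros z Hz. apply Hmargin.
      change (Rabs (z - x) <= (P - 1) * d) in Hz.
      pose proof (Rle_abs (z - x)). pose proof (Rle_abs (-(z - x))) as Hneg.
      rewrite Rabs_Ropp in Hneg. nra. }
  (* |g y - g x| <= M |y - x| < delta * C2 * 2^n * d <= C1 * d *)
  assert (Hd0 : 0 <= d) by apply Rabs_pos.
  assert (Hyx' : Rabs (y - x) < C2 * P * d) by nra.
  pose proof (Hlip y x (Hsub y ltac:(lra)) (Hsub x ltac:(lra))).
  pose proof (Rabs_pos (y - x)). nra.
Qed.
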